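(* Let $V$ be countably infinite, $\psi:K_V\to\mathbb N$ a fixed bijection, and $\sigma$ a permutation of $\mathbb N$. For $f:\mathscr{G}(V)\to\mathbb R$ and $G\in\mathscr{G}(V)\setminus\{\emptyset,K_V\}$ define the $\sigma$-twisted derivative $$f'_\sigma(G) := \lim_{G_1\to G,\ G_1\in\mathscr{G}'(V)\setminus\{G\}}\frac{f(G_1)-f(G)}{\|G_1\|_{\sigma\circ\psi,2}-\|G\|_{\sigma\circ\psi,2}}$$ (if the limit exists). (a) If $\sigma\in S_\infty$ and $f'(G)$ exists, then $f'_\sigma(G)$ exists and equals $f'(G)$. (b) If $\sigma\notin S_\infty$, $G\in\mathscr{G}'(V)$, and $f'(G)$ exists and is nonzero, then $f'_\sigma(G)$ does not exist.
   Context: $K_V$ is the set of $2$-element subsets of $V$; $\mathscr{G}(V)$ is the set of simple graphs on $V$ identified with their edge sets, with the product topology of $\{0,1\}^{K_V}$; $\mathscr{G}'(V)$ is the set of graphs $G$ with both $G$ and $K_V\setminus G$ infinite. $\mathbb N=\{1,2,\dots\}$. For a bijection $\chi:K_V\to\mathbb N$, $\|G\|_{\chi,2}:=\sum_{e\in G}2^{-\chi(e)}$. $f'(G) := f'_{\mathrm{id}}(G)$ is the derivative with respect to $\psi$, i.e. the same limit with $\|\cdot\|_{\psi,2}$ in the denominator (limits taken in the product topology). $S_\infty$ is the group of permutations of $\mathbb N$ fixing all but finitely many elements. *)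

From Stdlib Require Import Reals List Classical ClassicalEpsilon.
Open Scope R_scope.

Definition is_2set {V : Type} (e : V -> Prop) : Prop :=
  exists x y : V, x <> y /\ forall z, e z <-> (z = x \/ z = y).

Definition K (V : Type) : Type := { e : V -> Prop | is_2set e }.

Definition graph (V : Type) : Type := K V -> bool.

Record Bij (A B : Type) : Type := {
  fw : A -> B;
  bw : B -> A;
  bw_fw : forall a, bw (fw a) = a;
  fw_bw : forall b, fw (bw b) = b }.
Arguments fw {A B} _ _.
Arguments bw {A B} _ _.

(* composition: (bij_comp g h) has forward map  h o g *)
Definition bij_comp {A B C : Type} (g : Bij A B) (h : Bij B C) : Bij A C.
Proof.
  refine {| fw := fun a => fw h (fw g a); bw := fun c => bw g (bw h c) |}.
  - intro a. rewrite (bw_fw _ _ h). apply bw_fw.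
  - intro c. rewrite (fw_bw _ _ g). apply fw_bw.
Defined.

(* Convention: the paper's N = {1,2,...} is Rocq's nat shifted by one,
   so a bijection chi : K_V -> N is represented by chi : Bij (K V) nat
   and the paper's value chi(e) is (fw chi e + 1). *)

(* ||G||_{chi,2} = sum_{e in G} 2^{-chi(e)}, summed along the enumeration chi^{-1}. *)
Definition norm2 {V : Type} (chi : Bij (K V) nat) (G : graph V) : R :=
  epsilon (inhabits 0)
    (fun l => infinite_sum
       (fun n => if G (bw chi n) then (/ 2) ^ (S n) else 0) l).

Definition finite_set {V : Type} (G : graph V) : Prop :=
  exists l : list (K V), forall e, G e = true -> In e l.

Definition cofinite_set {V : Type} (G : graph V) : Prop :=
  exists l : list (K V), forall e, G e = false -> In e l.

Definition Gprime {V : Type} (G : graph V) : Prop :=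
  ~ finite_set G /\ ~ cofinite_set G.

Definition empty_graph (V : Type) : graph V := fun _ => false.
Definition complete_graph (V : Type) : graph V := fun _ => true.

(* Limit in the product topology of {0,1}^{K_V}: basic neighbourhoods of G
   are the graphs agreeing with G on a finite list of edges.
   has_deriv f chi G L  :  lim_{G1 -> G, G1 in G'(V) \ {G}}
        (f G1 - f G) / (||G1||_{chi,2} - ||G||_{chi,2})  =  L. *)
Definition has_deriv {V : Type} (f : graph V -> R) (chi : Bij (K V) nat)
  (G : graph V) (L : R) : Prop :=
  forall eps, eps > 0 ->
    exists l : list (K V),
      forall G1 : graph V,
        Gprime G1 -> G1 <> G ->
        (forall e, In e l -> G1 e = G e) ->
        Rabs ((f G1 - f G) / (norm2 chi G1 - norm2 chi G) - L) < eps.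

Definition S_infinity (sigma : Bij nat nat) : Prop :=
  exists N : nat, forall n : nat, (N <= n)%nat -> fw sigma n = n.

From Stdlib Require Import Reals List Classical ClassicalEpsilon Lia Lra FinFun.
Open Scope R_scope.

(* If σ ∈ S_∞ fixes every index from N on, then for every G₁ agreeing with G
   on the first N edges the two norm differences ‖G₁‖ − ‖G‖ coincide, so the
   difference quotients are literally equal.  If σ ∉ S_∞, flip a single edge e
   of G far out: the denominators have moduli 2^-(ψ(e)+1) and 2^-(σψ(e)+1), so
   the two quotients differ by the factor 2^(σψ(e) − ψ(e)).  As σ moves
   infinitely many indices up and infinitely many down, the limits would
   satisfy both |L'| ≥ 2|L| and |L| ≥ 2|L'|, forcing L = 0. *)

Lemma infinite_sum_ext (a b : nat -> R) (l : R) :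
  (forall n, a n = b n) -> infinite_sum a l -> infinite_sum b l.
Proof.
  intros Hab Ha.
  apply (Un_cv_ext (sum_f_R0 a)); [|exact Ha].
  intro n; apply sum_eq; auto.
Qed.

Lemma infinite_sum_minus (a b : nat -> R) (la lb : R) :
  infinite_sum a la -> infinite_sum b lb ->
  infinite_sum (fun n => a n - b n) (la - lb).
Proof.
  intros Ha Hb.
  apply (Un_cv_ext (fun n => sum_f_R0 a n - sum_f_R0 b n)).
  - intro n; symmetry; apply minus_sum.
  - exact (CV_minus _ _ _ _ Ha Hb).
Qed.

Lemma sum_f_R0_single (a : nat -> R) (k : nat) :
  (forall n, n <> k -> a n = 0) ->
  forall n, (k <= n)%nat -> sum_f_R0 a n = a k.
Proof.
  intros Ha n Hn; induction Hn as [|n Hn IH].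
  - destruct k as [|k]; [reflexivity|].
    cbn; rewrite sum_eq_R0 by (intros; apply Ha; lia); ring.
  - cbn; rewrite IH, (Ha (S n)) by lia; ring.
Qed.

Lemma infinite_sum_single (a : nat -> R) (k : nat) :
  (forall n, n <> k -> a n = 0) -> infinite_sum a (a k).
Proof.
  intros Ha eps Heps; exists k; intros n Hn.
  rewrite (sum_f_R0_single a k Ha n Hn).
  unfold Rdist; rewrite Rminus_diag, Rabs_R0; lra.
Qed.

Lemma bounded_on_initial_segment (g : nat -> nat) (M : nat) :
  exists C, (M <= C)%nat /\ forall m, (m < M)%nat -> (g m < C)%nat.
Proof.
  induction M as [|M [C [HMC HC]]].
  - exists 0%nat; split; [lia | intros; lia].
  - exists (C + g M + 1)%nat; split; [lia|].
    intros m Hm; destruct (Nat.eq_dec m M) as [->|]; [lia|].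
    specialize (HC m ltac:(lia)); lia.
Qed.

Lemma injective_segment_surjective (g : nat -> nat) (K : nat) :
  Injective g -> (forall m, (m <= K)%nat -> (g m <= K)%nat) ->
  forall k, (k <= K)%nat -> exists m, (m <= K)%nat /\ g m = k.
Proof.
  intros Hinj Hmaps k Hk.
  set (img := map g (seq 0 (S K))).
  assert (Hnodup : NoDup img) by (apply Injective_map_NoDup, seq_NoDup; exact Hinj).
  assert (Hincl : incl img (seq 0 (S K))).
  { intros v Hv; apply in_map_iff in Hv as [m [<- Hm]].
    apply in_seq in Hm; apply in_seq; specialize (Hmaps m ltac:(lia)); lia. }
  assert (Hlen : (length (seq 0 (S K)) <= length img)%nat)
    by (unfold img; rewrite length_map; lia).
  assert (Hin : In k img) by (apply (NoDup_length_incl Hnodup Hlen Hincl), in_seq; lia).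
  apply in_map_iff in Hin as [m [Hm Hseq]]; apply in_seq in Hseq.
  exists m; split; [lia | exact Hm].
Qed.

Lemma Bij_injective {A B : Type} (s : Bij A B) : Injective (fw s).
Proof. intros a b E; rewrite <- (bw_fw _ _ s a), <- (bw_fw _ _ s b), E; reflexivity. Qed.

(* A permutation of ℕ with σ(n) ≤ n for all large n maps each long enough
   segment [0, K] into itself, hence onto itself, and so fixes K. *)
Lemma not_S_infinity_exceeds (s : Bij nat nat) :
  ~ S_infinity s -> forall M, exists n, (M <= n)%nat /\ (n < fw s n)%nat.
Proof.
  intros Hs M; apply NNPP; intro Hnone; apply Hs.
  assert (Hle : forall n, (M <= n)%nat -> (fw s n <= n)%nat).
  { intros n Hn; apply Nat.nlt_ge; intro Hlt; apply Hnone; exists n; auto. }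
  destruct (bounded_on_initial_segment (fw s) M) as [C [HMC HC]].
  assert (Hmaps : forall n, (C <= n)%nat -> forall m, (m <= n)%nat -> (fw s m <= n)%nat).
  { intros n Hn m Hm; destruct (Nat.lt_ge_cases m M) as [Hlt|Hge].
    - specialize (HC m Hlt); lia.
    - specialize (Hle m Hge); lia. }
  exists C; intros n Hn.
  destruct (injective_segment_surjective (fw s) n (Bij_injective s) (Hmaps n Hn) n
              (Nat.le_refl n)) as [m [Hm Hsm]].
  destruct (Nat.lt_ge_cases m M) as [Hlt|Hge].
  - specialize (HC m Hlt); lia.
  - specialize (Hle m Hge); replace n with m in * by lia; exact Hsm.
Qed.

Definition inv_bij {A B : Type} (s : Bij A B) : Bij B A :=
  {| fw := bw s; bw := fw s; bw_fw := fw_bw _ _ s; fw_bw := bw_fw _ _ s |}.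

Lemma S_infinity_inv_bij (s : Bij nat nat) : S_infinity (inv_bij s) -> S_infinity s.
Proof.
  intros [N HN]; exists N; intros n Hn.
  rewrite <- (HN n Hn) at 1; apply fw_bw.
Qed.

Section Graphs.

Variable V : Type.

Definition flip_edge (G : graph V) (e0 : K V) : graph V :=
  fun e => if excluded_middle_informative (e = e0) then negb (G e) else G e.

Lemma flip_edge_at (G : graph V) (e0 : K V) : flip_edge G e0 e0 = negb (G e0).
Proof. unfold flip_edge; destruct (excluded_middle_informative (e0 = e0)); congruence. Qed.

Lemma flip_edge_other (G : graph V) (e0 e : K V) : e <> e0 -> flip_edge G e0 e = G e.
Proof. unfold flip_edge; destruct (excluded_middle_informative (e = e0)); congruence. Qed.

Lemma flip_edge_neq (G : graph V) (e0 : K V) : flip_edge G e0 <> G.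
Proof.
  intro E; pose proof (f_equal (fun H => H e0) E) as E0; cbn in E0.
  rewrite flip_edge_at in E0; destruct (G e0); discriminate.
Qed.

Lemma finite_set_flip_edge (G : graph V) (e0 : K V) :
  finite_set (flip_edge G e0) -> finite_set G.
Proof.
  intros [l Hl]; exists (e0 :: l); intros e He.
  destruct (classic (e = e0)) as [->|Hne]; [left; reflexivity|].
  right; apply Hl; rewrite flip_edge_other; assumption.
Qed.

Lemma cofinite_set_flip_edge (G : graph V) (e0 : K V) :
  cofinite_set (flip_edge G e0) -> cofinite_set G.
Proof.
  intros [l Hl]; exists (e0 :: l); intros e He.
  destruct (classic (e = e0)) as [->|Hne]; [left; reflexivity|].
  right; apply Hl; rewrite flip_edge_other; assumption.
Qed.

Lemma Gprime_flip_edge (G : graph V) (e0 : K V) : Gprime G -> Gprime (flip_edge G e0).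
Proof.
  intros [Hfin Hcofin]; split; intro H.
  - exact (Hfin (finite_set_flip_edge G e0 H)).
  - exact (Hcofin (cofinite_set_flip_edge G e0 H)).
Qed.

Definition norm2_term (chi : Bij (K V) nat) (G : graph V) (n : nat) : R :=
  if G (bw chi n) then (/ 2) ^ (S n) else 0.

Lemma norm2_spec (chi : Bij (K V) nat) (G : graph V) :
  infinite_sum (norm2_term chi G) (norm2 chi G).
Proof.
  unfold norm2; apply epsilon_spec.
  destruct (Rseries_CV_comp (norm2_term chi G) (fun n => 1 * (/ 2) ^ n)) as [l Hl].
  - intro n; unfold norm2_term.
    assert (0 < (/ 2) ^ n) by (apply pow_lt; lra).
    destruct (G (bw chi n)); cbn; split; nra.
  - exists (/ (1 - / 2)); apply GP_infinite; rewrite Rabs_pos_eq; lra.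
  - exists l; exact Hl.
Qed.

Lemma norm2_sub (chi : Bij (K V) nat) (G1 G : graph V) :
  infinite_sum (fun n => norm2_term chi G1 n - norm2_term chi G n)
    (norm2 chi G1 - norm2 chi G).
Proof. apply infinite_sum_minus; apply norm2_spec. Qed.

Lemma norm2_sub_comp_finitary (chi : Bij (K V) nat) (sigma : Bij nat nat) (N : nat)
  (G1 G : graph V) :
  (forall n, (N <= n)%nat -> fw sigma n = n) ->
  (forall n, (n < N)%nat -> G1 (bw chi n) = G (bw chi n)) ->
  norm2 (bij_comp chi sigma) G1 - norm2 (bij_comp chi sigma) G =
  norm2 chi G1 - norm2 chi G.
Proof.
  intros Hfix Hagree.
  apply (uniqueness_sum (fun n => norm2_term chi G1 n - norm2_term chi G n));
    [|apply norm2_sub].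
  eapply infinite_sum_ext; [|apply norm2_sub].
  intro n; unfold norm2_term; cbn.
  destruct (Nat.lt_ge_cases n N) as [Hn|Hn].
  - assert (Hbw : (bw sigma n < N)%nat).
    { apply Nat.nle_gt; intro Hge; pose proof (Hfix _ Hge) as E.
      rewrite fw_bw in E; lia. }
    rewrite (Hagree _ Hbw), (Hagree _ Hn); ring.
  - assert (Hbw : bw sigma n = n).
    { pose proof (bw_fw _ _ sigma n) as E; rewrite Hfix in E by lia; exact E. }
    rewrite Hbw; reflexivity.
Qed.

Lemma Rabs_norm2_sub_flip_edge (chi : Bij (K V) nat) (G : graph V) (e : K V) :
  Rabs (norm2 chi (flip_edge G e) - norm2 chi G) = (/ 2) ^ S (fw chi e).
Proof.
  set (k := fw chi e).
  assert (Hoff : forall n, n <> k ->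
            norm2_term chi (flip_edge G e) n - norm2_term chi G n = 0).
  { intros n Hn; unfold norm2_term; rewrite flip_edge_other; [ring|].
    intros E; apply Hn; unfold k; rewrite <- E, fw_bw; reflexivity. }
  rewrite (uniqueness_sum _ _ _ (norm2_sub chi (flip_edge G e) G)
             (infinite_sum_single _ k Hoff)).
  unfold norm2_term, k; rewrite bw_fw, flip_edge_at.
  assert (0 < (/ 2) ^ S (fw chi e)) by (apply pow_lt; lra).
  destruct (G e); cbn [negb];
    [rewrite Rminus_0_l, Rabs_Ropp | rewrite Rminus_0_r]; apply Rabs_pos_eq; lra.
Qed.

Lemma index_bound (chi : Bij (K V) nat) (l : list (K V)) :
  exists M, forall e, In e l -> (fw chi e < M)%nat.
Proof.
  induction l as [|a l [M HM]].
  - exists 0%nat; intros e [].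
  - exists (M + fw chi a + 1)%nat; intros e [<-|He]; [lia|].
    specialize (HM e He); lia.
Qed.

Variable f : graph V -> R.

Lemma has_deriv_comp_finitary (chi : Bij (K V) nat) (sigma : Bij nat nat)
  (G : graph V) (L : R) :
  S_infinity sigma -> has_deriv f chi G L -> has_deriv f (bij_comp chi sigma) G L.
Proof.
  intros [N Hfix] Hd eps Heps.
  destruct (Hd eps Heps) as [l Hl].
  exists (l ++ map (bw chi) (seq 0 N)); intros G1 HG1 Hne Hagree.
  rewrite (norm2_sub_comp_finitary chi sigma N G1 G Hfix).
  - apply Hl; [assumption | assumption |].
    intros e He; apply Hagree, in_or_app; left; exact He.
  - intros n Hn; apply Hagree, in_or_app; right; apply in_map, in_seq; lia.
Qed.

Definition diff_quot (chi : Bij (K V) nat) (G G1 : graph V) : R :=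
  (f G1 - f G) / (norm2 chi G1 - norm2 chi G).

Lemma has_deriv_flip_edge (chi : Bij (K V) nat) (G : graph V) (L eps : R) :
  Gprime G -> has_deriv f chi G L -> eps > 0 ->
  exists l : list (K V), forall e, ~ In e l ->
    Rabs (diff_quot chi G (flip_edge G e) - L) < eps.
Proof.
  intros HG Hd Heps; destruct (Hd eps Heps) as [l Hl].
  exists l; intros e He.
  apply Hl; [apply Gprime_flip_edge, HG | apply flip_edge_neq |].
  intros e' He'; apply flip_edge_other; intros ->; contradiction.
Qed.

Lemma Rabs_diff_quot_flip_edge (chi : Bij (K V) nat) (G : graph V) (e : K V) :
  Rabs (diff_quot chi G (flip_edge G e)) = Rabs (f (flip_edge G e) - f G) * 2 ^ S (fw chi e).
Proof.
  unfold diff_quot, Rdiv.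
  rewrite Rabs_mult, Rabs_inv, Rabs_norm2_sub_flip_edge, pow_inv, Rinv_inv.
  reflexivity.
Qed.

Lemma diff_quot_flip_edge_dilation (chi chi' : Bij (K V) nat) (G : graph V) (e : K V) :
  (fw chi e < fw chi' e)%nat ->
  2 * Rabs (diff_quot chi G (flip_edge G e)) <= Rabs (diff_quot chi' G (flip_edge G e)).
Proof.
  intros Hlt; rewrite !Rabs_diff_quot_flip_edge.
  assert (Hpow : 2 * 2 ^ S (fw chi e) <= 2 ^ S (fw chi' e)).
  { change (2 * 2 ^ S (fw chi e)) with (2 ^ S (S (fw chi e))).
    apply Rle_pow; [lra | lia]. }
  pose proof (Rabs_pos (f (flip_edge G e) - f G)); nra.
Qed.

Lemma has_deriv_dilation (chi chi' : Bij (K V) nat) (G : graph V) (L L' : R) :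
  Gprime G -> has_deriv f chi G L -> has_deriv f chi' G L' ->
  (forall M, exists e, (M <= fw chi e)%nat /\ (fw chi e < fw chi' e)%nat) ->
  2 * Rabs L <= Rabs L'.
Proof.
  intros HG Hd Hd' Hup; apply Rle_plus_epsilon; intros eps Heps.
  destruct (has_deriv_flip_edge chi G L (eps / 3) HG Hd ltac:(lra)) as [l1 H1].
  destruct (has_deriv_flip_edge chi' G L' (eps / 3) HG Hd' ltac:(lra)) as [l2 H2].
  destruct (index_bound chi (l1 ++ l2)) as [M HM].
  destruct (Hup M) as [e [HMe Hlt]].
  assert (Hout : ~ In e (l1 ++ l2)) by (intro Hin; specialize (HM e Hin); lia).
  specialize (H1 e (fun Hin => Hout (in_or_app _ _ _ (or_introl Hin)))).
  specialize (H2 e (fun Hin => Hout (in_or_app _ _ _ (or_intror Hin)))).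
  pose proof (diff_quot_flip_edge_dilation chi chi' G e Hlt) as Hdil.
  set (q := diff_quot chi G (flip_edge G e)) in *.
  set (r := diff_quot chi' G (flip_edge G e)) in *.
  pose proof (Rabs_triang_inv L q) as Tq; rewrite Rabs_minus_sym in Tq.
  pose proof (Rabs_triang_inv r L') as Tr.
  lra.
Qed.

End Graphs.

Theorem theorem3p10 (V : Type) (psi : Bij (K V) nat) (sigma : Bij nat nat)
  (f : graph V -> R) :
  (forall (G : graph V) (L : R),
     S_infinity sigma ->
     G <> empty_graph V -> G <> complete_graph V ->
     has_deriv f psi G L ->
     has_deriv f (bij_comp psi sigma) G L)
  /\
  (forall (G : graph V) (L : R),
     ~ S_infinity sigma ->
     Gprime G ->
     has_deriv f psi G L -> L <> 0 ->
     ~ (exists L' : R, has_deriv f (bij_comp psi sigma) G L')).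
Proof.
  split.
  - intros G L HS _ _; apply has_deriv_comp_finitary, HS.
  - intros G L HS HG Hd HL [L' Hd'].
    assert (Hup : 2 * Rabs L <= Rabs L').
    { apply (has_deriv_dilation V f psi (bij_comp psi sigma) G L L' HG Hd Hd').
      intro M; destruct (not_S_infinity_exceeds sigma HS M) as [n [Hn Hlt]].
      exists (bw psi n); cbn; rewrite fw_bw; split; assumption. }
    assert (Hdown : 2 * Rabs L' <= Rabs L).
    { apply (has_deriv_dilation V f (bij_comp psi sigma) psi G L' L HG Hd' Hd).
      intro M.
      destruct (not_S_infinity_exceeds (inv_bij sigma)
                  (fun H => HS (S_infinity_inv_bij sigma H)) M) as [n [Hn Hlt]].
      exists (bw psi (bw sigma n)); cbn in *; rewrite !fw_bw; split; assumption. }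
    pose proof (Rabs_pos_lt L HL); lra.
Qed.
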